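(* Assume that in any packing of unit balls in $\mathbb{E}^3$, whenever $14$ different members $\mathbf{B}_1,\dots,\mathbf{B}_{14}$ are such that each of $\mathbf{B}_2,\dots,\mathbf{B}_{13}$ touches $\mathbf{B}_1$, the centers of $\mathbf{B}_1$ and $\mathbf{B}_{14}$ are at distance at least $2.52$. Then: if $\mathbf{B}_1,\dots,\mathbf{B}_{13}$ are $13$ different members of a packing of unit balls in $\mathbb{E}^3$ with each of $\mathbf{B}_2,\dots,\mathbf{B}_{13}$ touching $\mathbf{B}_1$, and $\hat{\mathbf{B}}_i$ is the closed ball of radius $\hat r:=1.58731$ concentric with $\mathbf{B}_i$, then $$\mathrm{bd}(\hat{\mathbf{B}}_1)\subset\bigcup_{j=2}^{13}\hat{\mathbf{B}}_j.$$
   Context: A packing of unit balls is a family of closed unit balls in $\mathbb{E}^3$ with pairwise disjoint interiors; two balls touch if their centers are at distance $2$. $\mathrm{bd}$ denotes boundary. *)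

From Stdlib Require Import Reals.
Open Scope R_scope.

Definition point : Type := (R * R * R)%type.

Definition edist (p q : point) : R :=
  let '(x1, y1, z1) := p in
  let '(x2, y2, z2) := q in
  sqrt ((x1 - x2)^2 + (y1 - y2)^2 + (z1 - z2)^2).

Definition closed_ball (c : point) (r : R) (x : point) : Prop := edist x c <= r.
Definition open_ball (c : point) (r : R) (x : point) : Prop := edist x c < r.
Definition sphere (c : point) (r : R) (x : point) : Prop := edist x c = r.

(* A family of closed unit balls is represented by the set of its centers
   (a unit ball is determined by its center).  It is a packing if distinct
   members have disjoint interiors. *)
Definition unit_ball_packing (P : point -> Prop) : Prop :=
  forall c d : point, P c -> P d -> c <> d ->
    ~ (exists z : point, open_ball c 1 z /\ open_ball d 1 z).

Definition touches (c d : point) : Prop := edist c d = 2.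

Definition r_hat : R := 1.58731.

(* Suppose a point x of the sphere of radius r_hat about c_1 is not covered.
   Its image y := c_1 + (4 / r_hat^2) (x - c_1) under the inversion in the
   sphere of radius 2 about c_1 satisfies |y - c_j| = (2 / r_hat) |x - c_j| > 2
   for every touching neighbour c_j, since the inversion fixes c_j.  So the unit
   ball about y can be added to B_1, ..., B_13, while |y - c_1| = 4 / r_hat < 2.52,
   against the hypothesis. *)

From Stdlib Require Import Reals Lra Psatz Classical Lia.
Open Scope R_scope.

Definition dist2 (p q : point) : R :=
  let '(x1, y1, z1) := p in
  let '(x2, y2, z2) := q in
  (x1 - x2)^2 + (y1 - y2)^2 + (z1 - z2)^2.

Lemma edist_sqrt (p q : point) : edist p q = sqrt (dist2 p q).
Proof. destruct p as [[? ?] ?], q as [[? ?] ?]; reflexivity. Qed.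

Lemma dist2_ge0 (p q : point) : 0 <= dist2 p q.
Proof.
  destruct p as [[x1 y1] z1], q as [[x2 y2] z2]; simpl.
  pose proof (pow2_ge_0 (x1 - x2)); pose proof (pow2_ge_0 (y1 - y2));
    pose proof (pow2_ge_0 (z1 - z2)); lra.
Qed.

Lemma dist2_sym (p q : point) : dist2 p q = dist2 q p.
Proof. destruct p as [[? ?] ?], q as [[? ?] ?]; simpl; ring. Qed.

Lemma dist2_xx (p : point) : dist2 p p = 0.
Proof. destruct p as [[? ?] ?]; simpl; ring. Qed.

Lemma edist_ge0 (p q : point) : 0 <= edist p q.
Proof. rewrite edist_sqrt; apply sqrt_pos. Qed.

Lemma edist_sqr (p q : point) : edist p q ^ 2 = dist2 p q.
Proof. rewrite edist_sqrt; apply pow2_sqrt, dist2_ge0. Qed.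

Lemma dist2_le_parallelogram (c d z : point) :
  dist2 c d <= 2 * dist2 z c + 2 * dist2 z d.
Proof.
  destruct c as [[c1 c2] c3], d as [[d1 d2] d3], z as [[z1 z2] z3]; simpl.
  pose proof (pow2_ge_0 (2 * z1 - c1 - d1)); pose proof (pow2_ge_0 (2 * z2 - c2 - d2));
    pose proof (pow2_ge_0 (2 * z3 - c3 - d3)); nra.
Qed.

Lemma open_unit_balls_disjoint (c d : point) : 4 <= dist2 c d ->
  ~ (exists z : point, open_ball c 1 z /\ open_ball d 1 z).
Proof.
  intros Hcd [z [Hc Hd]]; unfold open_ball in Hc, Hd.
  pose proof (edist_sqr z c); pose proof (edist_sqr z d).
  pose proof (edist_ge0 z c); pose proof (edist_ge0 z d).
  pose proof (dist2_le_parallelogram c d z); nra.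
Qed.

Lemma unit_ball_packing_mono (P Q : point -> Prop) :
  (forall z, Q z -> P z) -> unit_ball_packing P -> unit_ball_packing Q.
Proof. intros HQP HP c d Hc Hd; apply HP; auto. Qed.

Lemma unit_ball_packing_add (P : point -> Prop) (y : point) :
  unit_ball_packing P -> (forall d, P d -> 4 <= dist2 y d) ->
  unit_ball_packing (fun z => P z \/ z = y).
Proof.
  intros HP Hy c d [Hc | ->] [Hd | ->] Hne.
  - now apply HP.
  - apply open_unit_balls_disjoint; rewrite dist2_sym; auto.
  - now apply open_unit_balls_disjoint, Hy.
  - now contradiction Hne.
Qed.

Definition rescale (a : point) (k : R) (x : point) : point :=
  let '(a1, a2, a3) := a in
  let '(x1, x2, x3) := x in
  (a1 + k * (x1 - a1), a2 + k * (x2 - a2), a3 + k * (x3 - a3)).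

Lemma dist2_rescale_center (a x : point) (k : R) :
  dist2 (rescale a k x) a = k ^ 2 * dist2 x a.
Proof. destruct a as [[? ?] ?], x as [[? ?] ?]; simpl; ring. Qed.

Lemma dist2_rescale (a b x : point) (k : R) :
  k * dist2 x a = dist2 b a -> dist2 (rescale a k x) b = k * dist2 x b.
Proof.
  destruct a as [[a1 a2] a3], b as [[b1 b2] b3], x as [[x1 x2] x3].
  cbv beta iota delta [dist2 rescale]; intros Hk.
  transitivity (k * ((x1 - b1) ^ 2 + (x2 - b2) ^ 2 + (x3 - b3) ^ 2)
                + (((b1 - a1) ^ 2 + (b2 - a2) ^ 2 + (b3 - a3) ^ 2)
                   - k * ((x1 - a1) ^ 2 + (x2 - a2) ^ 2 + (x3 - a3) ^ 2)) * (1 - k));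
    [ring|].
  rewrite <- Hk; ring.
Qed.

Definition fourteen_ball_bound : Prop :=
  forall (P : point -> Prop) (c : nat -> point),
    unit_ball_packing P ->
    (forall i, (1 <= i <= 14)%nat -> P (c i)) ->
    (forall i j, (1 <= i <= 14)%nat -> (1 <= j <= 14)%nat -> i <> j -> c i <> c j) ->
    (forall j, (2 <= j <= 13)%nat -> touches (c j) (c 1%nat)) ->
    edist (c 1%nat) (c 14%nat) >= 2.52.

Section AddedBall.

Variables (P : point -> Prop) (c : nat -> point) (y : point).
Hypothesis Hpack : unit_ball_packing P.
Hypothesis Hmem : forall i, (1 <= i <= 13)%nat -> P (c i).
Hypothesis Hdist :
  forall i j, (1 <= i <= 13)%nat -> (1 <= j <= 13)%nat -> i <> j -> c i <> c j.
Hypothesis Htouch : forall j, (2 <= j <= 13)%nat -> touches (c j) (c 1%nat).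
Hypothesis Hy : forall i, (1 <= i <= 13)%nat -> 4 <= dist2 y (c i).

Let c_ext (i : nat) : point := if Nat.eqb i 14 then y else c i.
Let P_ext (z : point) : Prop := (exists i, (1 <= i <= 13)%nat /\ z = c i) \/ z = y.

Lemma c_ext_old (i : nat) : i <> 14%nat -> c_ext i = c i.
Proof. unfold c_ext; destruct (Nat.eqb_spec i 14); congruence. Qed.

Lemma y_neq_center (i : nat) : (1 <= i <= 13)%nat -> y <> c i.
Proof. intros Hi ->; pose proof (Hy i Hi); rewrite dist2_xx in *; lra. Qed.

Lemma extended_packing : unit_ball_packing P_ext.
Proof.
  apply unit_ball_packing_add.
  - apply (unit_ball_packing_mono P); [|exact Hpack].
    intros z [i [Hi ->]]; auto.
  - intros d [i [Hi ->]]; auto.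
Qed.

Lemma added_ball_far (Hbound : fourteen_ball_bound) : 2.52 ^ 2 <= dist2 y (c 1%nat).
Proof.
  assert (Hfar : edist (c_ext 1%nat) (c_ext 14%nat) >= 2.52).
  { apply (Hbound P_ext); [exact extended_packing | | |].
    - intros i Hi; destruct (Nat.eq_dec i 14) as [-> | Hne]; [now right|].
      left; exists i; split; [lia | now rewrite c_ext_old].
    - intros i j Hi Hj Hij.
      destruct (Nat.eq_dec i 14) as [-> | Hi14], (Nat.eq_dec j 14) as [-> | Hj14].
      + contradiction.
      + rewrite (c_ext_old j) by exact Hj14; apply y_neq_center; lia.
      + rewrite (c_ext_old i) by exact Hi14; intro E; apply (y_neq_center i); [lia | auto].
      + rewrite !c_ext_old; auto; apply Hdist; lia.
    - intros j Hj; rewrite !c_ext_old by lia; auto. }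
  change (c_ext 1%nat) with (c 1%nat) in Hfar; change (c_ext 14%nat) with y in Hfar.
  rewrite dist2_sym, <- edist_sqr; nra.
Qed.

End AddedBall.

Lemma r_hat_sqr : r_hat ^ 2 = 2.5195530361.
Proof. unfold r_hat; lra. Qed.

Theorem mainTheorem12 :
  (forall (P : point -> Prop) (c : nat -> point),
      unit_ball_packing P ->
      (forall i, (1 <= i <= 14)%nat -> P (c i)) ->
      (forall i j, (1 <= i <= 14)%nat -> (1 <= j <= 14)%nat -> i <> j -> c i <> c j) ->
      (forall j, (2 <= j <= 13)%nat -> touches (c j) (c 1%nat)) ->
      edist (c 1%nat) (c 14%nat) >= 2.52) ->
  forall (P : point -> Prop) (c : nat -> point),
    unit_ball_packing P ->
    (forall i, (1 <= i <= 13)%nat -> P (c i)) ->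
    (forall i j, (1 <= i <= 13)%nat -> (1 <= j <= 13)%nat -> i <> j -> c i <> c j) ->
    (forall j, (2 <= j <= 13)%nat -> touches (c j) (c 1%nat)) ->
    forall x : point, sphere (c 1%nat) r_hat x ->
      exists j, (2 <= j <= 13)%nat /\ closed_ball (c j) r_hat x.
Proof.
  intros Hbound P c Hpack Hmem Hdist Htouch x Hx.
  apply NNPP; intro Hnone.
  assert (Hxa : dist2 x (c 1%nat) = r_hat ^ 2) by (rewrite <- Hx; symmetry; apply edist_sqr).
  assert (Huncovered : forall j, (2 <= j <= 13)%nat -> r_hat ^ 2 < dist2 x (c j)).
  { intros j Hj; rewrite <- edist_sqr.
    assert (r_hat < edist x (c j)) by (apply Rnot_le_lt; intro; eauto).
    unfold r_hat in *; nra. }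
  set (k := 4 / r_hat ^ 2).
  assert (Hk : k * r_hat ^ 2 = 4) by (unfold k; field; unfold r_hat; lra).
  set (y := rescale (c 1%nat) k x).
  assert (Hy1 : dist2 y (c 1%nat) = 4 * k)
    by (unfold y; rewrite dist2_rescale_center, Hxa, <- Hk; ring).
  assert (Hyj : forall j, (2 <= j <= 13)%nat -> 4 < dist2 y (c j)).
  { intros j Hj; unfold y; rewrite (dist2_rescale _ (c j)).
    - pose proof (Huncovered j Hj); rewrite r_hat_sqr in *; nra.
    - pose proof (Htouch j Hj) as T; unfold touches in T.
      rewrite Hxa, Hk, <- edist_sqr, T; ring. }
  assert (Hy : forall i, (1 <= i <= 13)%nat -> 4 <= dist2 y (c i)).
  { intros i Hi; destruct (Nat.eq_dec i 1) as [-> | Hne].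
    - rewrite Hy1, r_hat_sqr in *; lra.
    - apply Rlt_le, Hyj; lia. }
  pose proof (added_ball_far P c y Hpack Hmem Hdist Htouch Hy Hbound).
  rewrite Hy1, r_hat_sqr in *; lra.
Qed.
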